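(* For every integer $n\ge 1$, let $C_n$ be the family of all distinct full star-simplices $\Sigma^{\star}_{\max}(\lambda,c)$ and full top-simplices $\Sigma^{\top}_{\max}(\lambda,a)$ of $K_n=\operatorname{Cl}(G_n)$ (over all $\lambda\vdash n$, removable corners $c$, addable corners $a$), and let $N_n$ be the nerve of $C_n$. Then \[ \chi(K_n)=\chi(N_n), \] equivalently $b_n=\chi(N_n)-1$ where $b_n:=\chi(K_n)-1$.
   Context: $G_n$ is the partition graph on the set of integer partitions of $n$: two partitions are adjacent if one is obtained from the other by decreasing one part by $1$ and increasing another part (possibly a part equal to $0$) by $1$, followed by reordering, with the result different from the original. $K_n=\operatorname{Cl}(G_n)$ is its clique complex. For $\lambda=(\lambda_1\ge\lambda_2\ge\cdots)\vdash n$ (with $\lambda_k=0$ for $k$ beyond the length $\ell$), a removable corner is a row $i$ with $\lambda_i>\lambda_{i+1}$, and an addable corner is a row $j\le \ell+1$ with $j=1$ or $\lambda_{j-1}>\lambda_j$. For a removable corner $c=i$ and an addable corner $a=j$ with $i\ne j$, $\lambda(c\to a)$ is the partition obtained by decreasing $\lambda_i$ by $1$, increasing $\lambda_j$ by $1$, and reordering; the transfer is admissible if $\lambda(c\to a)\neq\lambda$ (so $\lambda(c\to a)$ is a neighbour of $\lambda$ in $G_n$). Set $A_{\max}(\lambda,c)=\{a:\lambda(c\to a)\text{ admissible}\}$, $C_{\max}(\lambda,a)=\{c:\lambda(c\to a)\text{ admissible}\}$, $\Sigma^{\star}_{\max}(\lambda,c)=\{\lambda\}\cup\{\lambda(c\to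 a):a\in A_{\max}(\lambda,c)\}$ and $\Sigma^{\top}_{\max}(\lambda,a)=\{\lambda\}\cup\{\lambda(c\to a):c\in C_{\max}(\lambda,a)\}$; these vertex sets are cliques of $G_n$, hence simplices of $K_n$, and each is regarded as the subcomplex of $K_n$ consisting of all its faces. The nerve $N_n=N(C_n)$ is the simplicial complex with vertex set $C_n$ whose simplices are the nonempty subfamilies of $C_n$ with nonempty common intersection. $\chi$ denotes Euler characteristic. *)

From mathcomp Require Import all_boot all_order all_algebra.
Set Implicit Arguments. Unset Strict Implicit. Unset Printing Implicit Defensive.
Import GRing.Theory.

(* A partition of n is encoded by its vector of n+1 parts (lambda_1,...,lambda_{n+1}),
   padded with zeros, weakly decreasing, summing to n.  Index k : 'I_n.+1 is row k+1.
   (n+1 slots so that the addable row l+1 always has an index, even when l = n.) *)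
Definition is_partn (n : nat) (f : {ffun 'I_n.+1 -> 'I_n.+1}) : bool :=
  sorted geq [seq val (f i) | i <- enum 'I_n.+1] && (\sum_(i < n.+1) val (f i) == n).

Definition partn (n : nat) := {f : {ffun 'I_n.+1 -> 'I_n.+1} | is_partn f}.

Definition parts (n : nat) (l : partn n) : seq nat :=
  [seq val (val l i) | i <- enum 'I_n.+1].

Definition transfer (s : seq nat) (i j : nat) : seq nat :=
  sort geq (set_nth 0 (set_nth 0 s i (nth 0 s i).-1) j (nth 0 (set_nth 0 s i (nth 0 s i).-1) j).+1).

Definition adj (n : nat) (l m : partn n) : bool :=
  [exists i : 'I_n.+1, exists j : 'I_n.+1,
     [&& i != j, 0 < nth 0 (parts l) i, parts m == transfer (parts l) i j & m != l]].

Definition removable (n : nat) (l : partn n) (i : 'I_n.+1) : bool :=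
  nth 0 (parts l) i.+1 < nth 0 (parts l) i.

(* addable corner: row 1, or lambda_{j-1} > lambda_j (this forces j <= length+1) *)
Definition addable (n : nat) (l : partn n) (j : 'I_n.+1) : bool :=
  (val j == 0) || (nth 0 (parts l) j < nth 0 (parts l) j.-1).

Definition sigma_star (n : nat) (l : partn n) (c : 'I_n.+1) : {set partn n} :=
  l |: [set m | [exists a : 'I_n.+1,
          [&& addable l a, c != a, parts m == transfer (parts l) c a & m != l]]].

Definition sigma_top (n : nat) (l : partn n) (a : 'I_n.+1) : {set partn n} :=
  l |: [set m | [exists c : 'I_n.+1,
          [&& removable l c, c != a, parts m == transfer (parts l) c a & m != l]]].

Definition Cfam (n : nat) : {set {set partn n}} :=
  [set S | [exists l : partn n, exists c : 'I_n.+1, removable l c && (S == sigma_star l c)]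
        || [exists l : partn n, exists a : 'I_n.+1, addable l a && (S == sigma_top l a)]].

(* A finite simplicial complex is given by its set of (nonempty) faces. *)
Definition Kcomplex (n : nat) : {set {set partn n}} :=
  [set S | (S != set0) && [forall x in S, forall y in S, (x != y) ==> adj x y]].

(* N_n = nerve of C_n: nonempty subfamilies with nonempty common intersection
   (the members are full simplices, so their intersection as subcomplexes is
   nonempty iff their vertex sets meet) *)
Definition nerve (n : nat) : {set {set {set partn n}}} :=
  [set F | [&& F != set0, F \subset Cfam n & \bigcap_(S in F) S != set0]].

Definition euler (T : finType) (F : {set {set T}}) : int :=
  (\sum_(s in F) (-1) ^+ (#|s|.-1))%R.

From mathcomp Require Import all_boot all_order all_algebra zify.
From Stdlib Require Import Classical.
Set Implicit Arguments. Unset Strict Implicit. Unset Printing Implicit Defensive.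

(* Every member of C_n is a clique of G_n, and every clique of G_n lies in a
   member of C_n: the other vertices of the clique arise from any vertex x by
   corner moves (one unit from a removable to an addable row of x); as they are
   pairwise adjacent, any two of these moves share their source or their target
   row, so all of them share the source row (the clique lies in a star simplex
   of x) or all share the target row (a top simplex).  For a complex covered in
   this way by some of its simplices, chi(K) = chi(N(C)) by double counting. *)

Section EulerCovered.
Import GRing.Theory.
Local Open Scope ring_scope.

Lemma sum_sign_subsets (T : finType) (A : {set T}) : A != set0 ->
  \sum_(F : {set T} | F \subset A) ((-1) ^+ #|F| : int) = 0.
Proof.
case/set0Pn=> a aA.
pose flip (F : {set T}) := if a \in F then F :\ a else a |: F.
have flipK : involutive flip.
  move=> F; rewrite /flip; case: (boolP (a \in F)) => aF.
    by rewrite setD11 setD1K.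
  by rewrite setU11 setU1K.
have flip_sub F : (flip F \subset A) = (F \subset A).
  rewrite /flip; case: ifPn => aF; last by rewrite subUset sub1set aA.
  by rewrite -{2}(setD1K aF) subUset sub1set aA.
have flip_sign F : ((-1) ^+ #|flip F| : int) = - (-1) ^+ #|F|.
  rewrite /flip; case: ifPn => aF; last by rewrite cardsU1 aF exprS mulN1r.
  by rewrite [in RHS](cardsD1 a F) aF exprS mulN1r opprK.
set S := \sum_(F | _) _; suff : S = - S by lia.
rewrite {1}/S (reindex_inj (can_inj flipK)) /= -sumrN.
by apply: eq_big => F; rewrite ?flip_sub ?flip_sign.
Qed.

Lemma sum_sign_nonempty_subsets (T : finType) (A : {set T}) :
  \sum_(F : {set T} | (F != set0) && (F \subset A)) ((-1) ^+ #|F|.-1 : int)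
  = (A != set0)%:R.
Proof.
have [->|A0] := eqVneq A set0.
  by rewrite big_pred0 // => F; rewrite subset0 andNb.
have := sum_sign_subsets A0; rewrite (bigD1 set0) ?sub0set //= cards0 expr0.
have sign_pred (F : {set T}) : F != set0 -> ((-1) ^+ #|F|.-1 : int) = - (-1) ^+ #|F|.
  by rewrite -card_gt0; case: #|F| => // k _; rewrite exprS mulN1r opprK.
under eq_bigl do rewrite andbC.
move=> sum0; rewrite (eq_bigr (fun F : {set T} => - (-1) ^+ #|F| : int)) ?sumrN.
  by move/eqP: sum0; rewrite addrC addr_eq0 => /eqP->; rewrite opprK.
by move=> F /andP[F0 _]; apply: sign_pred.
Qed.

(* Double counting of the pairs (s, F), s a face and F a nonempty subfamily of
   C whose members all contain s: summing over F first, the faces inside the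
   simplex /\F contribute 1 exactly when /\F is nonempty. *)
Lemma euler_covered (T : finType) (K C : {set {set T}}) :
  set0 \notin K ->
  (forall s, s \in K -> exists2 S, S \in C & s \subset S) ->
  (forall S s : {set T}, S \in C -> s \subset S -> s != set0 -> s \in K) ->
  euler K = euler [set F | [&& F != set0, F \subset C & \bigcap_(S in F) S != set0]].
Proof.
move=> K0 coverK faceC; rewrite /euler.
pose sg (X : finType) (s : {set X}) : int := (-1) ^+ #|s|.-1.
pose above (s : {set T}) (F : {set {set T}}) := (F != set0) && (F \subset [set S in C | s \subset S]).
transitivity (\sum_(s in K) \sum_(F | above s F) sg _ s * sg _ F).
  apply: eq_bigr => s sK; rewrite -big_distrr /= /above /sg sum_sign_nonempty_subsets.
  have [S SC sS] := coverK s sK.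
  suff /negPf-> : [set S in C | s \subset S] != set0 by rewrite mulr1.
  by apply/set0Pn; exists S; rewrite inE SC.
rewrite (exchange_big_dep (fun F => (F != set0) && (F \subset C))) /=; last first.
  move=> s F _ /andP[-> /subsetP sFC]; apply/subsetP => S /sFC.
  by rewrite inE => /andP[].
rewrite [RHS]big_mkcond [LHS]big_mkcond /=; apply: eq_bigr => F _.
rewrite inE; have [->|F0] //= := eqVneq F set0; have [FC|] //= := boolP (F \subset C).
rewrite -big_distrl /=.
rewrite (eq_bigl (fun s => (s != set0) && (s \subset \bigcap_(S in F) S))).
  by rewrite sum_sign_nonempty_subsets; case: (_ != set0); rewrite ?mul1r ?mul0r.
move=> s; rewrite /above F0 /=.
have -> : (F \subset [set S in C | s \subset S]) = (s \subset \bigcap_(S in F) S).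
  apply/subsetP/bigcapsP => sF S SF; first by have := sF S SF; rewrite inE => /andP[].
  by rewrite inE (subsetP FC) ?sF.
apply/andP/andP => -[s0 sI]; split => //; first by apply: contraNneq K0 => <-.
have /set0Pn[S SF] := F0.
by apply: (faceC S) => //; [exact: (subsetP FC) | exact: subset_trans sI (bigcap_inf _ _)].
Qed.

End EulerCovered.

Section Transfer.
Implicit Types (s t u : seq nat) (a b i j k : nat).

Lemma geq_trans : transitive geq. Proof. by move=> y x z /= yx zy; apply: leq_trans zy yx. Qed.
Lemma geq_total : total geq. Proof. by move=> x y; apply: leq_total. Qed.
Lemma geq_anti : antisymmetric geq. Proof. by move=> x y /= /andP[yx xy]; apply/eqP; rewrite eqn_leq xy. Qed.

Lemma sorted_geq_nth s i j : sorted geq s -> i <= j -> j < size s -> nth 0 s j <= nth 0 s i.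
Proof.
move=> s_sorted le_ij lt_js.
by apply: (sorted_leq_nth geq_trans leqnn) => //; rewrite inE; lia.
Qed.

Definition raw_transfer s i j :=
  set_nth 0 (set_nth 0 s i (nth 0 s i).-1) j (nth 0 (set_nth 0 s i (nth 0 s i).-1) j).+1.

Lemma transferE s i j : transfer s i j = sort geq (raw_transfer s i j).
Proof. by []. Qed.

Lemma size_raw_transfer s i j : i < size s -> j < size s -> size (raw_transfer s i j) = size s.
Proof. by move=> lt_is lt_js; rewrite !size_set_nth; lia. Qed.

Lemma nth_raw_transfer s i j k : i != j ->
  nth 0 (raw_transfer s i j) k =
    if k == j then (nth 0 s j).+1 else if k == i then (nth 0 s i).-1 else nth 0 s k.
Proof.
by move=> neq_ij; rewrite !nth_set_nth /= [j == i]eq_sym (negPf neq_ij) nth_set_nth.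
Qed.

(* [moved s a b t]: [t] is [s] with one unit taken from row [a] and given to
   row [b], without reordering (stated additively, as [-] is truncated). *)
Definition moved s a b t :=
  size t = size s /\ forall k, nth 0 t k + (k == a) = nth 0 s k + (k == b).

Lemma moved_sym s a b t : moved s a b t -> moved t b a s.
Proof. by move=> [size_t nth_t]; split=> // k; have := nth_t k; lia. Qed.

Lemma moved_uniq s a b t u : moved s a b t -> moved s a b u -> t = u.
Proof.
move=> [size_t nth_t] [size_u nth_u]; apply: (@eq_from_nth _ 0) => [|k _].
  by rewrite size_t size_u.
by have := nth_t k; have := nth_u k; lia.
Qed.

Lemma moved_refl s a t : moved s a a t -> t = s.
Proof.
move=> [size_t nth_t]; apply: (@eq_from_nth _ 0) => // k _.
by have := nth_t k; lia.
Qed.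

Lemma moved_self s a b : moved s a b s -> a = b.
Proof. by move=> [_ /(_ a)]; rewrite eqxx; case: eqP => //; lia. Qed.

Lemma moved_gt0 s a b t : moved s a b t -> a != b -> 0 < nth 0 s a.
Proof. by move=> [_ /(_ a)]; rewrite eqxx => nth_a /negPf neq_ab; move: nth_a; rewrite neq_ab; lia. Qed.

Lemma moved_ltn_size s a b t : moved s a b t -> a != b -> (a < size s) && (b < size s).
Proof.
move=> mv_st neq_ab; have := moved_gt0 mv_st neq_ab.
have [size_t /(_ b)] := mv_st; rewrite eqxx [b == a]eq_sym (negPf neq_ab) => nth_b pos_a.
apply/andP; split; rewrite ltnNge; apply/negP => ge_size.
  by move: pos_a; rewrite nth_default.
by move: nth_b; rewrite (nth_default _ ge_size) nth_default ?size_t.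
Qed.

Lemma moved_common_src s a b b' t u : moved s a b t -> moved s a b' u -> moved t b b' u.
Proof.
move=> [size_t nth_t] [size_u nth_u]; split=> [|k]; first by rewrite size_t.
by have := nth_t k; have := nth_u k; lia.
Qed.

Lemma moved_common_dst s a a' b t u : moved s a b t -> moved s a' b u -> moved t a' a u.
Proof.
move=> [size_t nth_t] [size_u nth_u]; split=> [|k]; first by rewrite size_t.
by have := nth_t k; have := nth_u k; lia.
Qed.

Lemma moved_triangle s t u a1 b1 a2 b2 e f : moved s a1 b1 t -> moved s a2 b2 u ->
  moved t e f u -> a1 != b1 -> a2 != b2 -> a1 = a2 \/ b1 = b2.
Proof.
move=> [_ nth_t] [_ nth_u] [_ nth_tu] neq_ab1 neq_ab2.
have [->|neq_a] := eqVneq a1 a2; first by left.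
have [->|neq_b] := eqVneq b1 b2; [by right | exfalso].
have coef k : (k == b2) + (k == e) + (k == a1) = (k == b1) + (k == f) + (k == a2) :> nat.
  by have := nth_t k; have := nth_u k; have := nth_tu k; lia.
have := coef a2; have := coef b2; have := coef a1.
rewrite !eqxx (negPf neq_ab1) (negPf neq_ab2) [b2 == a2]eq_sym (negPf neq_ab2).
rewrite (negPf neq_a) [a2 == a1]eq_sym (negPf neq_a) [b2 == b1]eq_sym (negPf neq_b).
by case: (a2 =P e) => [<-|_]; case: (b2 =P f) => [<-|_]; rewrite ?eqxx ?(negPf neq_ab2) /=; lia.
Qed.

Lemma raw_transfer_moved s i j : i != j -> i < size s -> j < size s -> 0 < nth 0 s i ->
  moved s i j (raw_transfer s i j).
Proof.
move=> neq_ij lt_is lt_js pos_i; split=> [|k]; first exact: size_raw_transfer.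
rewrite nth_raw_transfer //.
have [->|neq_kj] := eqVneq k j; first by rewrite [j == i]eq_sym (negPf neq_ij) addn0 addn1.
by have [->|neq_ki] := eqVneq k i; first lia.
Qed.

Lemma count_set_nth p s i v : i < size s ->
  count p (set_nth 0 s i v) + p (nth 0 s i) = count p s + p v.
Proof.
move=> lt_is; rewrite count_set_nth_ltn //.
suff : p (nth 0 s i) <= count p s by lia.
have [p_si|] //= := boolP (p (nth 0 s i)).
by rewrite -has_count; apply/hasP; exists (nth 0 s i); rewrite ?mem_nth.
Qed.

Lemma count_raw_transfer p s i j : i != j -> i < size s -> j < size s ->
  count p (raw_transfer s i j) + p (nth 0 s i) + p (nth 0 s j) =
  count p s + p (nth 0 s i).-1 + p (nth 0 s j).+1.
Proof.
move=> neq_ij lt_is lt_js; rewrite /raw_transfer.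
set s1 := set_nth 0 s i _.
have nth_s1_j : nth 0 s1 j = nth 0 s j by rewrite nth_set_nth /= eq_sym (negPf neq_ij).
have := @count_set_nth p s1 j (nth 0 s1 j).+1; rewrite size_set_nth nth_s1_j.
have := @count_set_nth p s i (nth 0 s i).-1 lt_is; rewrite -/s1.
by move=> count_s1 /(_ ltac:(lia)); lia.
Qed.

Lemma transfer_nth_congr s i j a b : i != j -> a != b ->
  i < size s -> j < size s -> a < size s -> b < size s ->
  nth 0 s i = nth 0 s a -> nth 0 s j = nth 0 s b -> transfer s i j = transfer s a b.
Proof.
move=> neq_ij neq_ab lt_is lt_js lt_as lt_bs eq_ia eq_jb; rewrite !transferE.
apply/(perm_sortP geq_total geq_trans geq_anti)/permP => p.
have := count_raw_transfer p neq_ij lt_is lt_js.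
have := count_raw_transfer p neq_ab lt_as lt_bs.
by rewrite eq_ia eq_jb => <- /eqP; rewrite -!addnA eqn_add2r => /eqP.
Qed.

Definition removable_at s a := nth 0 s a.+1 < nth 0 s a.
Definition addable_at s b := (b == 0) || (nth 0 s b < nth 0 s b.-1).

(* Moving a unit from a removable to an addable row keeps the rows sorted,
   unless the unit falls down just one row and so only swaps two values. *)
Lemma sorted_raw_transfer s a b : sorted geq s -> a != b -> a < size s -> b < size s ->
  removable_at s a -> addable_at s b -> ~~ ((b == a.+1) && (nth 0 s a == (nth 0 s b).+1)) ->
  sorted geq (raw_transfer s a b).
Proof.
move=> s_sorted neq_ab lt_as lt_bs rem_a add_b not_swap.
have [size_t nth_t] := raw_transfer_moved neq_ab lt_as lt_bs (leq_trans (ltn0Sn _) rem_a).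
apply/(sortedP 0) => k; rewrite size_t => lt_k1s /=.
have le_k1k : nth 0 s k.+1 <= nth 0 s k by apply: sorted_geq_nth.
have add_b_k : k.+1 = b -> nth 0 s b < nth 0 s k by move=> eq_b; move: add_b; rewrite /addable_at -eq_b.
have := nth_t k; have := nth_t k.+1; move: not_swap rem_a add_b_k le_k1k; rewrite /removable_at.
by case: (eqVneq k a) => [?|?]; case: (eqVneq k b) => [?|?];
   case: (eqVneq k.+1 a) => [?|?]; case: (eqVneq k.+1 b) => [?|?]; subst => /=; lia.
Qed.

Lemma transfer_corner s a b : sorted geq s -> a != b -> a < size s -> b < size s ->
  removable_at s a -> addable_at s b -> transfer s a b = s \/ moved s a b (transfer s a b).
Proof.
move=> s_sorted neq_ab lt_as lt_bs rem_a add_b.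
have pos_a : 0 < nth 0 s a by apply: leq_trans rem_a.
have [/andP[_ /eqP eq_a]|not_swap] := boolP ((b == a.+1) && (nth 0 s a == (nth 0 s b).+1)).
  left; rewrite transferE -[RHS](sorted_sort geq_trans s_sorted).
  apply/(perm_sortP geq_total geq_trans geq_anti)/permP => p.
  by have := count_raw_transfer p neq_ab lt_as lt_bs; rewrite eq_a /=; lia.
right; rewrite transferE (sorted_sort geq_trans (sorted_raw_transfer _ _ _ _ _ _ not_swap)) //.
exact: raw_transfer_moved.
Qed.

Lemma transfer_of_moved s a b t : moved s a b t -> sorted geq t -> a != b -> transfer s a b = t.
Proof.
move=> mv_st t_sorted neq_ab; have /andP[lt_as lt_bs] := moved_ltn_size mv_st neq_ab.
have mv_raw := raw_transfer_moved neq_ab lt_as lt_bs (moved_gt0 mv_st neq_ab).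
by rewrite transferE (moved_uniq mv_raw mv_st) (sorted_sort geq_trans t_sorted).
Qed.

Lemma last_in_block s i : sorted geq s -> i < size s -> 0 < nth 0 s i ->
  exists a, [/\ i <= a, a < size s, nth 0 s a = nth 0 s i & removable_at s a].
Proof.
move=> s_sorted lt_is pos_i.
pose f := find (fun v => v < nth 0 s i) s.
have le_fs : f <= size s := find_size _ _.
have lt_f : nth 0 s f < nth 0 s i.
  have [lt_fs|] := ltnP f (size s); last by move/(nth_default 0)->.
  by move: lt_fs; rewrite -has_find => /(nth_find 0).
have lt_if : i < f.
  rewrite ltnNge; apply/negP => le_fi.
  by have := sorted_geq_nth s_sorted le_fi lt_is; lia.
have ge_f1 : nth 0 s i <= nth 0 s f.-1.
  by rewrite leqNgt; apply/negbT/(before_find 0 (a := fun v => v < nth 0 s i)); lia.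
have le_f1 : nth 0 s f.-1 <= nth 0 s i.
  by apply: sorted_geq_nth => //; lia.
exists f.-1; split; try lia.
by rewrite /removable_at prednK; lia.
Qed.

Lemma first_in_block s j : sorted geq s -> j < size s ->
  exists b, [/\ b <= j, nth 0 s b = nth 0 s j & addable_at s b].
Proof.
move=> s_sorted lt_js.
pose f := find (pred1 (nth 0 s j)) s.
have le_fj : f <= j.
  by rewrite leqNgt; apply/negP => /(before_find 0); rewrite /= eqxx.
have /eqP eq_f : nth 0 s f == nth 0 s j.
  by apply: (nth_find 0 (a := pred1 (nth 0 s j))); rewrite has_pred1 mem_nth.
exists f; split => //; rewrite /addable_at; case: (posnP f) => [->//|pos_f]; apply/orP; right.
have ne_f1 : nth 0 s f.-1 != nth 0 s j.
  by apply/negbT/(before_find 0 (a := pred1 (nth 0 s j))); rewrite -/f; lia.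
have := sorted_geq_nth s_sorted (leq_pred f) (leq_ltn_trans le_fj lt_js); lia.
Qed.

(* Every transfer equals the one from the last row of the block of row [i]
   to the first row of the block of row [j]. *)
Lemma transfer_normal s i j : sorted geq s -> i != j -> i < size s -> j < size s ->
  0 < nth 0 s i -> transfer s i j = s \/
  exists a b, [/\ a != b, removable_at s a, addable_at s b & moved s a b (transfer s i j)].
Proof.
move=> s_sorted neq_ij lt_is lt_js pos_i.
have [a [le_ia lt_as eq_a rem_a]] := last_in_block s_sorted lt_is pos_i.
have [b [le_bj eq_b add_b]] := first_in_block s_sorted lt_js.
have lt_bs : b < size s by apply: leq_ltn_trans le_bj lt_js.
have neq_ab : a != b.
  apply/eqP => eq_ab; rewrite -eq_ab in eq_b add_b.
  have le_ja : j <= a.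
    rewrite leqNgt; apply/negP => lt_aj.
    by have := sorted_geq_nth s_sorted lt_aj lt_js; move: rem_a; rewrite /removable_at; lia.
  have le_ai : a <= i.
    case/orP: add_b => [/eqP->//|lt_a1]; rewrite leqNgt; apply/negP => lt_ia.
    by have := sorted_geq_nth s_sorted (ltac:(lia) : i <= a.-1) (ltac:(lia) : a.-1 < size s); lia.
  by move: neq_ij; lia.
rewrite (transfer_nth_congr neq_ij neq_ab) ?eq_a ?eq_b //.
have [->|mv_ab] := transfer_corner s_sorted neq_ab lt_as lt_bs rem_a add_b; first by left.
by right; exists a, b.
Qed.

End Transfer.

Lemma agree_first_or_second (T A B : Type) (P : T -> Prop) (R : T -> A -> B -> Prop) :
  (forall y, P y -> exists a b, R y a b) ->
  (forall y z a1 b1 a2 b2, P y -> P z -> y <> z -> R y a1 b1 -> R z a2 b2 -> a1 = a2 \/ b1 = b2) ->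
  (exists y, P y) ->
  (exists a, forall y, P y -> exists b, R y a b) \/ (exists b, forall y, P y -> exists a, R y a b).
Proof.
move=> rel_of agree [y1 P1]; have [a1 [b1 R1]] := rel_of y1 P1.
have [all_a1|not_all_a1] := classic (forall y, P y -> exists b, R y a1 b).
  by left; exists a1.
have [y2 /(imply_to_and (P _))[P2 not_a1]] := not_all_ex_not _ _ not_all_a1.
have [a2 [b2 R2]] := rel_of y2 P2.
have neq_a12 : a1 <> a2 by move=> eq_a; apply: not_a1; exists b2; rewrite eq_a.
have neq_y12 : y1 <> y2 by move=> eq_y; apply: not_a1; exists b1; rewrite -eq_y.
have eq_b12 : b1 = b2 by case: (agree _ _ _ _ _ _ P1 P2 neq_y12 R1 R2).
have [all_b1|not_all_b1] := classic (forall y, P y -> exists a, R y a b1).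
  by right; exists b1.
have [y3 /(imply_to_and (P _))[P3 not_b1]] := not_all_ex_not _ _ not_all_b1.
have [a3 [b3 R3]] := rel_of y3 P3.
have neq_b13 : b1 <> b3 by move=> eq_b; apply: not_b1; exists a3; rewrite eq_b.
have neq_y13 : y1 <> y3 by move=> eq_y; apply: not_b1; exists a1; rewrite -eq_y.
have neq_y23 : y2 <> y3 by move=> eq_y; apply: not_b1; exists a2; rewrite eq_b12 -eq_y.
have eq_a13 : a1 = a3 by case: (agree _ _ _ _ _ _ P1 P3 neq_y13 R1 R3).
exfalso; case: (agree _ _ _ _ _ _ P2 P3 neq_y23 R2 R3) => [eq_a23|eq_b23].
  exact: neq_a12 (etrans eq_a13 (esym eq_a23)).
exact: neq_b13 (etrans eq_b12 eq_b23).
Qed.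

Section Partitions.
Variable n : nat.
Implicit Types (l x y z : partn n).

Lemma size_parts l : size (parts l) = n.+1.
Proof. by rewrite size_map size_enum_ord. Qed.

Lemma sorted_parts l : sorted geq (parts l).
Proof. by have /andP[] := valP l. Qed.

Lemma parts_inj : injective (@parts n).
Proof.
move=> [f f_part] [g g_part] /= eq_fg; apply: val_inj; apply/ffunP => i; apply: val_inj.
exact: (proj2 (eq_in_map _ _ _) eq_fg) i (mem_enum _ i).
Qed.

Lemma nth_parts l (i : 'I_n.+1) : nth 0 (parts l) i = val (val l i).
Proof. by rewrite (nth_map ord0) ?size_enum_ord // nth_ord_enum. Qed.

Lemma parts_head_gt0 l : 0 < n -> 0 < nth 0 (parts l) 0.
Proof.
move=> n_gt0; rewrite lt0n; apply: contraTneq n_gt0 => head0.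
have parts0 i : val (val l i) = 0.
  have := sorted_geq_nth (sorted_parts l) (leq0n i).
  by rewrite size_parts head0 nth_parts => /(_ (ltn_ord i)); lia.
by have /andP[_ /eqP <-] := valP l; rewrite big1.
Qed.

Lemma exists_removable l : 0 < n -> exists c, removable l c.
Proof.
move=> n_gt0; have lt_0s : 0 < size (parts l) by rewrite size_parts.
have [a [_ lt_as _ rem_a]] := last_in_block (sorted_parts l) lt_0s (parts_head_gt0 l n_gt0).
by rewrite size_parts in lt_as; exists (Ordinal lt_as).
Qed.

Definition corner_move x y (a b : 'I_n.+1) :=
  [/\ a != b, removable x a, addable x b & moved (parts x) a b (parts y)].

Lemma adj_corner_move x y : adj x y -> exists a b, corner_move x y a b.
Proof.
case/existsP=> i /existsP[j /and4P[neq_ij pos_i /eqP eq_y neq_yx]].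
have := transfer_normal (sorted_parts x) neq_ij; rewrite !size_parts => /(_ (ltn_ord i) (ltn_ord j) pos_i).
rewrite -eq_y => -[/parts_inj eq_yx|[a [b [neq_ab rem_a add_b mv_ab]]]].
  by rewrite eq_yx eqxx in neq_yx.
have /andP[lt_a lt_b] := moved_ltn_size mv_ab neq_ab; rewrite size_parts in lt_a lt_b.
by exists (Ordinal lt_a), (Ordinal lt_b).
Qed.

Lemma moved_adj x y (a b : 'I_n.+1) : moved (parts x) a b (parts y) -> x != y -> adj x y.
Proof.
move=> mv_xy neq_xy; have neq_ab : a != b.
  by apply: contraNneq neq_xy => eq_ab; move: mv_xy; rewrite eq_ab => /moved_refl /parts_inj->.
apply/existsP; exists a; apply/existsP; exists b.
rewrite neq_ab (moved_gt0 mv_xy) // [y == x]eq_sym neq_xy andbT.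
by rewrite (transfer_of_moved mv_xy (sorted_parts y) neq_ab) eqxx.
Qed.

Lemma adj_sym x y : adj x y -> adj y x.
Proof.
move=> adj_xy; have [a [b [_ _ _ mv_xy]]] := adj_corner_move adj_xy.
apply: (moved_adj (moved_sym mv_xy)).
by apply: contraTneq adj_xy => ->; apply/existsPn => i; apply/existsPn => j; rewrite eqxx !andbF.
Qed.

Lemma corner_move_transfer x y (a b : 'I_n.+1) : removable x a -> addable x b -> a != b ->
  parts y = transfer (parts x) a b -> y != x -> corner_move x y a b.
Proof.
move=> rem_a add_b neq_ab eq_y neq_yx; split=> //.
have := transfer_corner (sorted_parts x) neq_ab; rewrite !size_parts -eq_y.
case/(_ (ltn_ord a) (ltn_ord b) rem_a add_b) => [/parts_inj eq_yx|//].
by rewrite eq_yx eqxx in neq_yx.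
Qed.

Lemma corner_move_neq x y a b : corner_move x y a b -> y != x.
Proof.
case=> neq_ab _ _ mv_xy; apply: contra neq_ab => /eqP eq_yx.
by apply/eqP/val_inj/(moved_self (s := parts x)); rewrite -{2}eq_yx.
Qed.

Lemma mem_sigma_star x c y : removable x c ->
  (y \in sigma_star x c) <-> (y = x \/ exists a, corner_move x y c a).
Proof.
move=> rem_c; rewrite in_setU1 inE; split.
  case/orP=> [/eqP|/existsP[a /and4P[add_a neq_ca /eqP eq_y neq_yx]]]; first by left.
  by right; exists a; apply: corner_move_transfer.
case=> [->|[a mv_a]]; first by rewrite eqxx.
have [neq_ca _ add_a mv_xy] := mv_a.
apply/orP; right; apply/existsP; exists a.
by rewrite add_a neq_ca (transfer_of_moved mv_xy (sorted_parts y) neq_ca) eqxx (corner_move_neq mv_a).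
Qed.

Lemma mem_sigma_top x a y : addable x a ->
  (y \in sigma_top x a) <-> (y = x \/ exists c, corner_move x y c a).
Proof.
move=> add_a; rewrite in_setU1 inE; split.
  case/orP=> [/eqP|/existsP[c /and4P[rem_c neq_ca /eqP eq_y neq_yx]]]; first by left.
  by right; exists c; apply: corner_move_transfer.
case=> [->|[c mv_c]]; first by rewrite eqxx.
have [neq_ca rem_c _ mv_xy] := mv_c.
apply/orP; right; apply/existsP; exists c.
by rewrite rem_c neq_ca (transfer_of_moved mv_xy (sorted_parts y) neq_ca) eqxx (corner_move_neq mv_c).
Qed.

Lemma sigma_star_clique x c y z : removable x c ->
  y \in sigma_star x c -> z \in sigma_star x c -> y != z -> adj y z.
Proof.
move=> rem_c /(mem_sigma_star _ rem_c) [->|[a [_ _ _ mv_y]]] /(mem_sigma_star _ rem_c)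
  [->|[a' [_ _ _ mv_z]]] neq_yz; first by rewrite eqxx in neq_yz.
- exact: moved_adj mv_z neq_yz.
- by apply/adj_sym/(moved_adj mv_y); rewrite eq_sym.
- exact: moved_adj (moved_common_src mv_y mv_z) neq_yz.
Qed.

Lemma sigma_top_clique x a y z : addable x a ->
  y \in sigma_top x a -> z \in sigma_top x a -> y != z -> adj y z.
Proof.
move=> add_a /(mem_sigma_top _ add_a) [->|[c [_ _ _ mv_y]]] /(mem_sigma_top _ add_a)
  [->|[c' [_ _ _ mv_z]]] neq_yz; first by rewrite eqxx in neq_yz.
- exact: moved_adj mv_z neq_yz.
- by apply/adj_sym/(moved_adj mv_y); rewrite eq_sym.
- exact: moved_adj (moved_common_dst mv_y mv_z) neq_yz.
Qed.

Lemma Cfam_clique S y z : S \in Cfam n -> y \in S -> z \in S -> y != z -> adj y z.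
Proof.
rewrite inE => /orP[/existsP[x /existsP[c /andP[rem_c /eqP->]]]
                   |/existsP[x /existsP[a /andP[add_a /eqP->]]]].
  exact: sigma_star_clique.
exact: sigma_top_clique.
Qed.

Lemma sub_sigma_star (s : {set partn n}) x c : removable x c ->
  (forall y, y \in s :\ x -> exists a, corner_move x y c a) -> s \subset sigma_star x c.
Proof.
move=> rem_c moves; apply/subsetP => y ys; apply/(mem_sigma_star _ rem_c).
by have [->|neq_yx] := eqVneq y x; [left | right; apply: moves; rewrite in_setD1 neq_yx].
Qed.

Lemma sub_sigma_top (s : {set partn n}) x a : addable x a ->
  (forall y, y \in s :\ x -> exists c, corner_move x y c a) -> s \subset sigma_top x a.
Proof.
move=> add_a moves; apply/subsetP => y ys; apply/(mem_sigma_top _ add_a).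
by have [->|neq_yx] := eqVneq y x; [left | right; apply: moves; rewrite in_setD1 neq_yx].
Qed.

Lemma sigma_star_Cfam x c : removable x c -> sigma_star x c \in Cfam n.
Proof.
by move=> rem_c; rewrite inE; apply/orP; left; apply/existsP; exists x; apply/existsP; exists c; rewrite rem_c eqxx.
Qed.

Lemma sigma_top_Cfam x a : addable x a -> sigma_top x a \in Cfam n.
Proof.
by move=> add_a; rewrite inE; apply/orP; right; apply/existsP; exists x; apply/existsP; exists a; rewrite add_a eqxx.
Qed.

Lemma clique_in_Cfam (s : {set partn n}) : 0 < n -> s != set0 ->
  {in s &, forall y z, y != z -> adj y z} -> exists2 S, S \in Cfam n & s \subset S.
Proof.
move=> n_gt0 /set0Pn[x xs] s_clique.
have [s_x0|[y0 y0sx]] := set_0Vmem (s :\ x).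
  have [c rem_c] := exists_removable x n_gt0.
  by exists (sigma_star x c); [exact: sigma_star_Cfam | apply: sub_sigma_star => // y; rewrite s_x0 inE].
have move_of y : y \in s :\ x -> exists a b, corner_move x y a b.
  by case/setD1P=> neq_yx ys; apply/adj_corner_move/s_clique; rewrite // eq_sym.
have agree y z a1 b1 a2 b2 : y \in s :\ x -> z \in s :\ x -> y <> z ->
    corner_move x y a1 b1 -> corner_move x z a2 b2 -> a1 = a2 \/ b1 = b2.
  move=> /setD1P[_ ys] /setD1P[_ zs] /eqP neq_yz [neq_ab1 _ _ mv_y] [neq_ab2 _ _ mv_z].
  have [e [f [_ _ _ mv_yz]]] := adj_corner_move (s_clique y z ys zs neq_yz).
  by case: (moved_triangle mv_y mv_z mv_yz neq_ab1 neq_ab2) => /val_inj; [left | right].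
have [[a moves_a]|[b moves_b]] := agree_first_or_second move_of agree (ex_intro _ y0 y0sx).
- have [b [_ rem_a _ _]] := moves_a y0 y0sx.
  by exists (sigma_star x a); [exact: sigma_star_Cfam | exact: sub_sigma_star].
- have [a [_ _ add_b _]] := moves_b y0 y0sx.
  by exists (sigma_top x b); [exact: sigma_top_Cfam | exact: sub_sigma_top].
Qed.

End Partitions.

Lemma KcomplexP n (s : {set partn n}) :
  reflect (s != set0 /\ {in s &, forall x y, x != y -> adj x y}) (s \in Kcomplex n).
Proof.
rewrite inE; apply: (iffP andP) => -[s0 s_clique]; split=> //.
  by move=> x y xs ys; move: s_clique => /forall_inP/(_ x xs)/forall_inP/(_ y ys)/implyP.
by apply/forall_inP => x xs; apply/forall_inP => y ys; apply/implyP; apply: s_clique.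
Qed.

Theorem proposition3p2 (n : nat) : 0 < n -> euler (Kcomplex n) = euler (nerve n).
Proof.
move=> n_gt0; apply: euler_covered.
- by rewrite inE eqxx.
- by move=> s /KcomplexP[s0 s_clique]; apply: clique_in_Cfam.
- move=> S s SC sS s0; apply/KcomplexP; split=> // x y xs ys.
  exact: Cfam_clique SC (subsetP sS x xs) (subsetP sS y ys).
Qed.
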